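(* Let $\mathscr{A}$ be a finite alphabet. Every minimal subshift $\Xi\subseteq\mathscr{A}^{\mathbb{Z}}$ is periodically approximable.
   Context: $\mathscr{A}^{\mathbb{Z}}$ carries the product topology ($\mathscr{A}$ discrete) and the shift $(T\xi)(j)=\xi(j-1)$. A subshift is a non-empty closed subset $\Xi$ with $T(\Xi)\subseteq\Xi$; it is minimal if the orbit $\mathrm{Orb}(\xi)=\{T^n\xi:n\in\mathbb{Z}\}$ is dense in $\Xi$ for every $\xi\in\Xi$. The set $\mathcal{J}$ of subshifts carries the Hausdorff (Vietoris) topology, with basis sets $\{\Xi:\Xi\cap F=\emptyset,\ \Xi\cap O\neq\emptyset\ \forall O\in\mathcal{F}\}$, $F$ closed, $\mathcal{F}$ a finite family of open subsets. A subshift is periodic if it equals $\mathrm{Orb}(\eta)$ for some $\eta$ with $T^n\eta=\eta$ for some $n\geq1$. $\Xi$ is periodically approximable if some sequence of periodic subshifts converges to $\Xi$ in $\mathcal{J}$. *)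

From mathcomp Require Import all_boot all_order all_algebra.
Set Implicit Arguments. Unset Strict Implicit. Unset Printing Implicit Defensive.
Import Order.TTheory GRing.Theory Num.Theory.
Local Open Scope ring_scope.

Definition config (A : Type) := int -> A.

Definition shiftn (A : Type) (n : int) (xi : config A) : config A :=
  fun j => xi (j - n).
Definition shift (A : Type) (xi : config A) : config A := shiftn 1 xi.

(* Product topology on A^Z with A discrete: basis of cylinders
   {eta | eta j = xi j for all |j| <= N}. *)
Definition agree (A : Type) (N : nat) (xi eta : config A) : Prop :=
  forall j : int, (`|j| <= N)%N -> xi j = eta j.

Definition is_open (A : Type) (U : config A -> Prop) : Prop :=
  forall xi, U xi -> exists N : nat, forall eta, agree N xi eta -> U eta.

Definition is_closed (A : Type) (F : config A -> Prop) : Prop :=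
  is_open (fun xi => ~ F xi).

Definition subshift (A : Type) (X : config A -> Prop) : Prop :=
  (exists xi, X xi) /\ is_closed X /\ (forall xi, X xi -> X (shift xi)).

Definition orbit (A : Type) (xi : config A) : config A -> Prop :=
  fun eta => exists n : int, eta = shiftn n xi.

Definition dense_in (A : Type) (D X : config A -> Prop) : Prop :=
  forall eta, X eta -> forall U, is_open U -> U eta -> exists zeta, D zeta /\ U zeta.

Definition minimal (A : Type) (X : config A -> Prop) : Prop :=
  subshift X /\ forall xi, X xi -> dense_in (orbit xi) X.

Definition periodic_subshift (A : Type) (X : config A -> Prop) : Prop :=
  subshift X /\
  exists (eta : config A) (n : nat), (1 <= n)%N /\ shiftn (n%:Z) eta = eta /\
    (forall zeta, X zeta <-> orbit eta zeta).

(* Basic open set of the Vietoris topology determined by the closed set F and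
   the finite family Os of open sets. *)
Definition vbasic (A : Type) (F : config A -> Prop) (k : nat)
  (Os : 'I_k -> config A -> Prop) (X : config A -> Prop) : Prop :=
  (forall xi, X xi -> ~ F xi) /\ (forall i, exists xi, X xi /\ Os i xi).

Definition vconverges (A : Type) (Xs : nat -> config A -> Prop)
  (X : config A -> Prop) : Prop :=
  forall (F : config A -> Prop) (k : nat) (Os : 'I_k -> config A -> Prop),
    is_closed F -> (forall i, is_open (Os i)) -> vbasic F Os X ->
    exists N : nat, forall n : nat, (N <= n)%N -> vbasic F Os (Xs n).

Definition periodically_approximable (A : Type) (X : config A -> Prop) : Prop :=
  exists Xs : nat -> config A -> Prop,
    (forall n, periodic_subshift (Xs n)) /\ vconverges Xs X.

From Pilot Require Import Defs.
From mathcomp Require Import all_boot all_order all_algebra zify ring.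
From Stdlib Require Import ClassicalEpsilon FunctionalExtensionality.
Set Implicit Arguments. Unset Strict Implicit. Unset Printing Implicit Defensive.
Import Order.TTheory GRing.Theory Num.Theory.
Local Open Scope ring_scope.

(* Fix xi in X.  By minimality and compactness every window xi[-n, n] recurs
   at some shift p >= 1, and the configuration of period p that copies xi on
   [-n - p, n] generates a periodic subshift Y_n.  Every window of radius n of
   a point of Y_n is a window of some shift of xi, a point of X, so by
   compactness of X the Y_n eventually miss any closed set disjoint from X.
   Conversely Y_n contains a configuration agreeing with xi on [-n, n], and the
   orbit of xi is dense in X, so Y_n eventually meets every open set that
   meets X. *)

Lemma agree_trans (A : Type) m (a b c : config A) :
  agree m a b -> agree m b c -> agree m a c.
Proof. by move=> hab hbc j hj; rewrite hab // hbc. Qed.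

Lemma agree_le (A : Type) m n (a b : config A) :
  (m <= n)%N -> agree n a b -> agree m a b.
Proof. by move=> hmn hab j hj; apply: hab; lia. Qed.

Lemma agree_open (A : Type) m (a : config A) : is_open (agree m a).
Proof. by move=> b hab; exists m => c; apply: agree_trans. Qed.

Lemma closed_approx (A : Type) (X : config A -> Prop) z :
  is_closed X -> (forall m, exists y, agree m z y /\ X y) -> X z.
Proof.
move=> Xcl approx; apply: NNPP => Xz; have [M hM] := Xcl z Xz.
by have [y [zy Xy]] := approx M; apply: hM zy Xy.
Qed.

Definition infinitely_often (P : nat -> Prop) :=
  forall K, exists2 N, (K <= N)%N & P N.

Lemma infinitely_often_pigeonhole (T : finType) (P : T -> nat -> Prop) :
  infinitely_often (fun N => exists t, P t N) -> exists t, infinitely_often (P t).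
Proof.
move=> often_some; apply: NNPP => never.
have bound t : exists K, forall N, (K <= N)%N -> ~ P t N.
  apply: NNPP => unbounded; apply: never; exists t => K.
  apply: NNPP => hK; apply: unbounded; exists K => N KN PN.
  by apply: hK; exists N.
have [K hK] := choice _ bound.
have [N hN [t PtN]] := often_some (\max_t K t).
by apply: (hK t N) PtN; apply: leq_trans (leq_bigmax t) hN.
Qed.

Section ClusterPoint.
Variables (A : finType) (x : nat -> config A).

Definition agree_lt (m : nat) (w w' : config A) :=
  forall j : int, (`|j| < m)%N -> w j = w' j.

Definition cluster_at (m : nat) (w : config A) :=
  infinitely_often (fun N => agree_lt m w (x N)).

Lemma cluster_at_succ m w :
  cluster_at m w -> exists w', agree_lt m w w' /\ cluster_at m.+1 w'.
Proof.
move=> hw; pose ext (ab : A * A) : config A := fun j =>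
  if j == m%:Z then ab.1 else if j == - m%:Z then ab.2 else w j.
have : infinitely_often (fun N => exists ab, agree_lt m.+1 (ext ab) (x N)).
  move=> K; have [N KN wN] := hw K; exists N => //.
  exists (x N m%:Z, x N (- m%:Z)) => j hj; rewrite /ext /=.
  case: eqP => [->//|jm]; case: eqP => [->//|jNm]; apply: wN; lia.
case/infinitely_often_pigeonhole => ab hab; exists (ext ab); split => // j hj.
rewrite /ext; case: eqP => [?|_]; first lia.
by case: eqP => [?|_] //; lia.
Qed.

Fixpoint cluster_approx (m : nat) : config A :=
  if m is m'.+1 then
    epsilon (inhabits (x 0%N))
      (fun w => agree_lt m' (cluster_approx m') w /\ cluster_at m'.+1 w)
  else x 0%N.

Lemma cluster_approx_at m : cluster_at m (cluster_approx m).
Proof.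
elim: m => [|m IH]; first by move=> K; exists K => // j.
exact: (proj2 (epsilon_spec _ _ (cluster_at_succ IH))).
Qed.

Lemma cluster_approx_le m d :
  agree_lt m (cluster_approx m) (cluster_approx (m + d)).
Proof.
elim: d => [|d IH] j hj; first by rewrite addn0.
have step := proj1 (epsilon_spec (inhabits (x 0%N)) _ (cluster_at_succ (cluster_approx_at (m + d)))).
by rewrite IH // addnS step //; lia.
Qed.

Lemma cluster_point :
  exists z, forall m, infinitely_often (fun N => agree m z (x N)).
Proof.
exists (fun j => cluster_approx (`|j|.+1)%N j) => m K.
have [N KN zN] := cluster_approx_at m.+1 K.
exists N => // j hj; rewrite -zN; last lia.
have -> : m.+1 = ((`|j|.+1) + (m.+1 - `|j|.+1))%N by lia.
by apply: cluster_approx_le; lia.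
Qed.

End ClusterPoint.

Lemma closed_disjoint_sep (A : finType) (X F : config A -> Prop) :
  is_closed X -> is_closed F -> (forall x, X x -> ~ F x) ->
  exists M : nat, forall x y, X x -> agree M x y -> ~ F y.
Proof.
move=> Xcl Fcl XF; apply: NNPP => no_gap.
have close M : exists p : config A * config A, [/\ X p.1, agree M p.1 p.2 & F p.2].
  apply: NNPP => hM; apply: no_gap; exists M => x y Xx xy Fy.
  by apply: hM; exists (x, y).
have [p hp] := choice _ close; have [z hz] := cluster_point (fun N => (p N).1).
apply: (XF z).
  apply: closed_approx Xcl _ => m; have [N _ zN] := hz m 0%N.
  by exists (p N).1; case: (hp N).
apply: closed_approx Fcl _ => m; have [N mN zN] := hz m m; have [_ pN Fp] := hp N.
by exists (p N).2; split=> //; apply: agree_trans zN (agree_le mN pN).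
Qed.

Lemma shiftn0 (A : Type) (x : config A) : shiftn 0 x = x.
Proof. by apply: functional_extensionality => j; rewrite /shiftn subr0. Qed.

Lemma shiftnD (A : Type) a b (x : config A) :
  shiftn a (shiftn b x) = shiftn (a + b) x.
Proof. by apply: functional_extensionality => j; rewrite /shiftn; congr x; ring. Qed.

Lemma subshift_shiftn_nat (A : Type) (X : config A -> Prop) y :
  subshift X -> X y -> forall k : nat, X (shiftn k%:Z y).
Proof.
move=> [_ [_ Xsh]] Xy; elim=> [|k IH]; first by rewrite shiftn0.
have -> : shiftn k.+1%:Z y = shift (shiftn k%:Z y) by rewrite /shift shiftnD; congr shiftn; lia.
exact: Xsh.
Qed.

Definition window_period (A : Type) (xi : config A) (n p : nat) :=
  (0 < p)%N /\ forall j : int, (`|j| <= n)%N -> xi (j - p%:Z) = xi j.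

Section Minimal.
Variables (A : finType) (X : config A -> Prop).
Hypothesis minX : minimal X.

(* A cluster point z of the forward orbit of xi is in X, so xi is close to
   some shift T^m z, which is in turn close to T^(m + N) xi for large N. *)
Lemma minimal_window_period xi :
  X xi -> forall n, exists p, window_period xi n p.
Proof.
move=> Xxi n; have [[_ [Xcl _]] dense] := minX.
have [z hz] := cluster_point (fun k => shiftn k%:Z xi).
have Xz : X z.
  apply: closed_approx Xcl _ => m; have [N _ zN] := hz m 0%N.
  by exists (shiftn N%:Z xi); split=> //; apply: subshift_shiftn_nat minX.1 Xxi N.
have [_ [[m ->] xi_zm]] :=
  dense z Xz xi Xxi _ (@agree_open _ n xi) (fun j _ => erefl).
have [N mN zN] := hz (n + `|m|)%N (`|m|.+1).
exists (absz (m + N%:Z)); split=> [|j hj]; first lia.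
rewrite (xi_zm j hj) /shiftn zN; last lia.
by rewrite /shiftn; congr xi; lia.
Qed.

(* T^(-1) y is approximated by T^(p - 1) y, for p a period of a large window
   of y. *)
Lemma minimal_shiftN1 y : X y -> X (shiftn (-1) y).
Proof.
move=> Xy; apply: closed_approx minX.1.2.1 _ => m.
have [p [p_gt0 yp]] := minimal_window_period Xy m.+1.
exists (shiftn p.-1%:Z y); split; last exact: subshift_shiftn_nat minX.1 Xy _.
move=> j hj; rewrite /shiftn -(yp (j + 1)); last lia.
by congr y; lia.
Qed.

Lemma minimal_shiftn y : X y -> forall t : int, X (shiftn t y).
Proof.
move=> Xy [k|k]; first exact: subshift_shiftn_nat minX.1 Xy k.
elim: k => [|k IH]; first exact: minimal_shiftN1.
have -> : shiftn (Negz k.+1) y = shiftn (-1) (shiftn (Negz k) y).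
  by rewrite shiftnD; congr shiftn; rewrite !NegzE; lia.
exact: minimal_shiftN1.
Qed.

End Minimal.

(* The configuration of period p equal to xi on [n - p + 1, n]. *)
Definition periodize (A : Type) (xi : config A) (n p : nat) : config A :=
  fun j => xi (n%:Z - ((n%:Z - j) %% p%:Z)%Z).

Section Periodize.
Variables (A : Type) (xi : config A) (n p : nat).
Hypothesis xi_per : window_period xi n p.

Let p_gt0 : 0 < p%:Z.
Proof. by case: xi_per => ? _; lia. Qed.

Lemma window_period_iter (q : nat) (i : int) :
  - n%:Z - p%:Z <= i - q%:Z * p%:Z -> i <= n%:Z -> xi (i - q%:Z * p%:Z) = xi i.
Proof.
case: xi_per => _ xi_p; elim: q => [|q IH] lo hi; first by rewrite mul0r subr0.
have -> : i - q.+1%:Z * p%:Z = (i - q%:Z * p%:Z) - p%:Z by rewrite -addn1 PoszD; ring.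
by rewrite xi_p; [apply: IH|]; nia.
Qed.

Lemma periodizeE (j : int) :
  - n%:Z - p%:Z <= j -> j <= n%:Z -> periodize xi n p j = xi j.
Proof.
move=> lo hi; rewrite /periodize.
have e := divz_eq (n%:Z - j) p%:Z.
set Q := ((n%:Z - j) %/ p%:Z)%Z in e *; set r := ((n%:Z - j) %% p%:Z)%Z in e *.
have hr : 0 <= r < p%:Z by rewrite /r; lia.
have -> : j = n%:Z - r - `|Q|%N%:Z * p%:Z by nia.
by rewrite window_period_iter //; nia.
Qed.

Lemma periodize_periodic (j k : int) :
  periodize xi n p (j - k * p%:Z) = periodize xi n p j.
Proof.
rewrite /periodize; have -> : n%:Z - (j - k * p%:Z) = k * p%:Z + (n%:Z - j) by ring.
by rewrite modzMDl.
Qed.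

Lemma shiftn_periodize_mod (s : int) :
  shiftn s (periodize xi n p) = shiftn (s %% p%:Z)%Z (periodize xi n p).
Proof.
apply: functional_extensionality => j; rewrite /shiftn.
have e := divz_eq s p%:Z.
have -> : j - s = (j - (s %% p%:Z)%Z) - (s %/ p%:Z)%Z * p%:Z by lia.
exact: periodize_periodic.
Qed.

(* Any window of radius N <= n of a shift of the periodization fits, up to
   a multiple of p, inside [-n - p, n], where it is a window of xi. *)
Lemma periodize_window (N : nat) : (N <= n)%N ->
  forall k : int, exists t : int, agree N (shiftn t xi) (shiftn k (periodize xi n p)).
Proof.
move=> Nn k; pose c := N%:Z - n%:Z.
have e := divz_eq (k - c) p%:Z.
have hr : 0 <= ((k - c) %% p%:Z)%Z < p%:Z by lia.
exists (c + ((k - c) %% p%:Z)%Z) => j hj; rewrite /shiftn.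
have -> : j - k = (j - (c + ((k - c) %% p%:Z)%Z)) - ((k - c) %/ p%:Z)%Z * p%:Z.
  by rewrite /c; lia.
by rewrite periodize_periodic periodizeE //; rewrite /c; lia.
Qed.

Lemma orbit_periodize_closed : is_closed (Defs.orbit (periodize xi n p)).
Proof.
move=> z z_out.
have avoid_first q : exists M : nat, forall t : nat, (t < q)%N ->
    forall z', agree M z z' -> z' <> shiftn t%:Z (periodize xi n p).
  elim: q => [|q [M hM]]; first by exists 0%N.
  have [j zj] : exists j, z j <> shiftn q%:Z (periodize xi n p) j.
    apply: NNPP => same; apply: z_out; exists q%:Z.
    apply: functional_extensionality => j; apply: NNPP => hj; apply: same; by exists j.
  exists (maxn M `|j|) => t tq z' zz'; have [tq'|] := ltnP t q.
    by apply: hM tq' _ (agree_le (leq_maxl _ _) zz').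
  move=> qt; have -> : t = q by lia.
  by move=> e; apply: zj; rewrite -e; apply: zz'; apply: leq_maxr.
have [M hM] := avoid_first p; exists M => z' zz' [s z's].
have [r s_mod r_lt] : exists2 r : nat, (s %% p%:Z)%Z = r%:Z & (r < p)%N.
  by exists (absz (s %% p%:Z)%Z); lia.
by apply: (hM r r_lt z' zz'); rewrite z's shiftn_periodize_mod s_mod.
Qed.

Lemma periodize_subshift : periodic_subshift (Defs.orbit (periodize xi n p)).
Proof.
split; last first.
  exists (periodize xi n p), p; split; first by case: xi_per.
  split=> //; apply: functional_extensionality => j.
  by have := periodize_periodic j 1; rewrite mul1r.
split; first by exists (periodize xi n p), 0; rewrite shiftn0.
split; first exact: orbit_periodize_closed.
by move=> _ [s ->]; exists (1 + s); rewrite /shift shiftnD.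
Qed.

End Periodize.

Section Approximation.
Variables (A : finType) (X : config A -> Prop) (xi : config A) (per : nat -> nat).
Hypotheses (minX : minimal X) (Xxi : X xi).
Hypothesis per_ok : forall n, window_period xi n (per n).

Lemma periodize_avoids_closed (F : config A -> Prop) :
  is_closed F -> (forall z, X z -> ~ F z) ->
  exists M, forall n, (M <= n)%N ->
    forall y, Defs.orbit (periodize xi n (per n)) y -> ~ F y.
Proof.
move=> Fcl XF; have [M hM] := closed_disjoint_sep minX.1.2.1 Fcl XF.
exists M => n Mn _ [s ->].
have [t xi_t] := periodize_window (per_ok n) Mn s.
exact: hM (minimal_shiftn minX Xxi t) xi_t.
Qed.

Lemma periodize_meets_open (O : config A -> Prop) :
  is_open O -> (exists z, X z /\ O z) ->
  exists N, forall n, (N <= n)%N ->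
    exists y, Defs.orbit (periodize xi n (per n)) y /\ O y.
Proof.
move=> Oop [z [Xz Oz]]; have [R hR] := Oop z Oz.
have [_ [[m ->] z_xi]] :=
  minX.2 xi Xxi z Xz _ (@agree_open _ R z) (fun j _ => erefl).
exists (R + `|m|)%N => n hn; exists (shiftn m (periodize xi n (per n))).
split; first by exists m.
apply: hR => j hj; rewrite z_xi // /shiftn periodizeE //; lia.
Qed.

End Approximation.

Unset Implicit Arguments.

Theorem corollary1 (A : finType) (X : config A -> Prop) :
  minimal X -> periodically_approximable X.
Proof.
move=> minX; have [[xi Xxi] _] := minX.1.
have [per per_ok] := choice _ (minimal_window_period minX Xxi).
exists (fun n => Defs.orbit (periodize xi n (per n))); split.
  by move=> n; apply: periodize_subshift.
move=> F k Os Fcl Oop [XF XO].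
have [M hM] := periodize_avoids_closed minX Xxi per_ok Fcl XF.
have [N hN] := choice _ (fun i => periodize_meets_open minX Xxi per_ok (Oop i) (XO i)).
exists (maxn M (\max_(i < k) N i)) => n hn; split.
  by apply: hM; apply: leq_trans hn; apply: leq_maxl.
move=> i; apply: hN; apply: leq_trans hn; apply: leq_trans (leq_maxr _ _).
exact: leq_bigmax.
Qed.
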